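(* Let $f:[a,b]\to\mathbb{C}$ be continuous and write $f=g+ih$ with $g,h:[a,b]\to\mathbb{R}$ its real and imaginary parts. If $h$ is Lipschitz, then $$\dim_P(G(f))=\dim_P(G(g)),\quad \overline{\dim}_B(G(f))=\overline{\dim}_B(G(g)),\quad \underline{\dim}_B(G(f))=\underline{\dim}_B(G(g)).$$
   Context: For a function $u$ on $[a,b]$, $G(u)=\{(x,u(x)):x\in[a,b]\}$ denotes its graph; for complex-valued $u$ the graph is regarded as a subset of $\mathbb{R}\times\mathbb{C}\cong\mathbb{R}^3$ with the Euclidean metric, for real-valued $u$ as a subset of $\mathbb{R}^2$. $\dim_P$ is packing dimension, $\overline{\dim}_B$ and $\underline{\dim}_B$ are upper and lower box dimension. *)

From HB Require Import structures.
From mathcomp Require Import all_boot all_order all_algebra.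
From mathcomp Require Import all_classical all_reals all_analysis.
Set Implicit Arguments. Unset Strict Implicit. Unset Printing Implicit Defensive.
Import Order.TTheory GRing.Theory Num.Theory.
Import numFieldNormedType.Exports.
Local Open Scope classical_set_scope.
Local Open Scope ring_scope.

Section Dimensions.
Context {R : realType} {T : Type} (d : T -> T -> R).

Definition diam (A : set T) : \bar R :=
  ereal_sup [set (d x y)%:E | x in A & y in A].

(* N_delta(F): smallest number of sets of diameter at most delta covering F
   (+oo if there is no finite cover) *)
Definition covnum (F : set T) (delta : R) : \bar R :=
  ereal_inf [set (n%:R)%:E | n in [set n : nat | exists U : nat -> set T,
     (forall i, (i < n)%N -> (diam (U i) <= delta%:E)%E) /\
     F `<=` \bigcup_(i in [set i : nat | (i < n)%N]) U i]].

Definition box_ratio (F : set T) (delta : R) : \bar R :=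
  match covnum F delta with
  | (x%:E)%E => (ln x / (- ln delta))%:E
  | _ => +oo%E
  end.

(* upper box dimension: limsup_{delta -> 0+} log N_delta(F) / (-log delta) *)
Definition upper_box_dim (F : set T) : \bar R :=
  ereal_inf [set ereal_sup [set box_ratio F delta | delta in `]0, e[]
            | e in `]0, 1]].

(* lower box dimension: liminf_{delta -> 0+} log N_delta(F) / (-log delta) *)
Definition lower_box_dim (F : set T) : \bar R :=
  ereal_sup [set ereal_inf [set box_ratio F delta | delta in `]0, e[]
            | e in `]0, 1]].

Definition cball (x : T) (r : R) : set T := [set y | d x y <= r].

(* P^s_delta(F) = sup { sum_i |B_i|^s : {B_i} countable collection of disjoint
   (closed) balls of radii at most delta with centres in F };
   the diameter of a Euclidean ball of radius r is 2r. *)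
Definition packing_delta (s : R) (F : set T) (delta : R) : \bar R :=
  ereal_sup [set v | exists (J : set nat) (r : nat -> R) (x : nat -> T),
     (forall i, J i -> F (x i) /\ 0 < r i <= delta) /\
     (forall i j, J i -> J j -> i <> j ->
         cball (x i) (r i) `&` cball (x j) (r j) = set0) /\
     v = (\esum_(i in J) ((2 * r i) `^ s)%:E)%E].

(* packing premeasure P^s_0(F) = lim_{delta -> 0} P^s_delta(F)
   (a decreasing limit, hence an infimum) *)
Definition packing_premeasure (s : R) (F : set T) : \bar R :=
  ereal_inf [set packing_delta s F delta | delta in `]0, +oo[].

Definition packing_measure (s : R) (F : set T) : \bar R :=
  ereal_inf [set (\sum_(0 <= i <oo) packing_premeasure s (Fi i))%E
    | Fi in [set Fi : nat -> set T | F `<=` \bigcup_i Fi i]].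

Definition packing_dim (F : set T) : \bar R :=
  ereal_inf [set s%:E | s in [set s : R | 0 <= s /\ packing_measure s F = 0%E]].

End Dimensions.

Definition dist2 {R : realType} (p q : R * R) : R :=
  Num.sqrt ((p.1 - q.1) ^+ 2 + (p.2 - q.2) ^+ 2).

Definition dist3 {R : realType} (p q : R * R * R) : R :=
  Num.sqrt ((p.1.1 - q.1.1) ^+ 2 + (p.1.2 - q.1.2) ^+ 2 + (p.2 - q.2) ^+ 2).

Definition graph2 {R : realType} (a b : R) (u : R -> R) : set (R * R) :=
  [set (x, u x) | x in `[a, b]].

(* graph of f = g + i h : [a,b] -> C, as a subset of R x C = R^3,
   a point (x, f x) being identified with (x, Re f x, Im f x) *)
Definition graphC {R : realType} (a b : R) (g h : R -> R) : set (R * R * R) :=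
  [set (x, g x, h x) | x in `[a, b]].

From HB Require Import structures.
From mathcomp Require Import all_boot all_order all_algebra.
From mathcomp Require Import all_classical all_reals all_analysis.
From mathcomp Require Import ring lra.
Import Order.TTheory GRing.Theory Num.Theory.
Import numFieldNormedType.Exports.
Local Open Scope classical_set_scope.
Local Open Scope ring_scope.

(* The projection (x, g x, h x) |-> (x, g x) from G(f) onto G(g) is
   1-Lipschitz, and its inverse x |-> (x, g x, h x) is K-Lipschitz with
   K = sqrt (1 + L ^ 2) when h is L-Lipschitz.  Hence
   N_d(G(g)) <= N_d(G(f)) and N_(K d)(G(f)) <= N_d(G(g)), and the box
   dimensions do not see a constant rescaling of d.  A packing of G(g) lifts
   to a packing of G(f) with the same radii; a packing of G(f) by balls of
   radii r_i projects to a packing of G(g) by balls of radii r_i / K, since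
   two projected balls meeting at z force the original balls to meet above z.
   So P^s(G(g)) <= P^s(G(f)) <= K^s P^s(G(g)): the packing measures vanish for
   the same s. *)

Section Packings.
Context {R : realType} {T : Type} (d : T -> T -> R).

Definition is_packing (F : set T) (delta : R) (J : set nat) (r : nat -> R)
    (x : nat -> T) :=
  (forall i, J i -> F (x i) /\ 0 < r i <= delta) /\
  (forall i j, J i -> J j -> i <> j ->
     cball d (x i) (r i) `&` cball d (x j) (r j) = set0).

Definition packing_sum (s : R) (J : set nat) (r : nat -> R) : \bar R :=
  (\esum_(i in J) ((2 * r i) `^ s)%:E)%E.

Lemma packing_delta_ge0 (t0 : T) (s : R) (F : set T) (delta : R) :
  (0 <= packing_delta d s F delta)%E.
Proof.
apply: le_ereal_sup_tmp; exists 0%E => //.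
by exists set0, (fun=> 1), (fun=> t0); rewrite esum_set0.
Qed.

Lemma packing_premeasure_ge0 (t0 : T) (s : R) (F : set T) :
  (0 <= packing_premeasure d s F)%E.
Proof.
by apply: le_ereal_inf_tmp => _ [delta _ <-]; exact: packing_delta_ge0.
Qed.

Lemma packing_measure_ge0 (t0 : T) (s : R) (F : set T) :
  (0 <= packing_measure d s F)%E.
Proof.
apply: le_ereal_inf_tmp => _ [Fi _ <-].
by apply: nneseries_ge0 => i _ _; exact: packing_premeasure_ge0.
Qed.

End Packings.

Lemma packing_dim_eq_of_le {R : realType} {TA TB : Type} (dA : TA -> TA -> R)
    (dB : TB -> TB -> R) (A : set TA) (B : set TB) (tA : TA) (tB : TB) :
  (forall s, exists c : R, packing_measure dA s A <= c%:E * packing_measure dB s B)%E ->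
  (forall s, exists c : R, packing_measure dB s B <= c%:E * packing_measure dA s A)%E ->
  packing_dim dA A = packing_dim dB B.
Proof.
move=> AB BA; rewrite /packing_dim; congr ereal_inf; congr image.
apply/funext => s; apply/propext; split=> -[s0 P0]; split => //; apply/eqP.
  have [c] := BA s; rewrite P0 mule0 => PB0.
  by rewrite eq_le PB0 (packing_measure_ge0 _ tB).
have [c] := AB s; rewrite P0 mule0 => PA0.
by rewrite eq_le PA0 (packing_measure_ge0 _ tA).
Qed.

Lemma esumZl_le {R : realType} (J : set nat) (c : R) (f : nat -> \bar R) :
  0 <= c -> (forall i, 0 <= f i)%E ->
  (\esum_(i in J) (c%:E * f i) <= c%:E * \esum_(i in J) f i)%E.
Proof.
move=> c0 f0; apply: ge_ereal_sup => _ [I I_J <-].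
rewrite -ge0_mule_fsumr //; apply: lee_wpmul2l; first by rewrite lee_fin.
by apply: ereal_sup_ubound; exists I.
Qed.

Section PackingComparison.
Context {R : realType} {TA TB : Type} (dA : TA -> TA -> R) (dB : TB -> TB -> R).
Variables (tB : TB) (s : R).

Lemma packing_premeasure_le (F : set TA) (G : set TB) (c : R) : 0 < c ->
  (forall delta J r x, 0 < delta -> is_packing dB G delta J r x ->
     exists r' x', is_packing dA F delta J r' x' /\
       (packing_sum s J r <= c%:E * packing_sum s J r')%E) ->
  (packing_premeasure dB s G <= c%:E * packing_premeasure dA s F)%E.
Proof.
move=> c0 transfer; rewrite /packing_premeasure -ereal_inf_pZl //.
apply: le_ereal_inf_tmp => _ [_ [delta delta0 <-] <-].
have {}delta0 : 0 < delta by move: delta0; rewrite /= in_itv /= andbT.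
apply: le_trans (_ : packing_delta dB s G delta <= _)%E.
  by apply: ereal_inf_lbound; exists delta => //; rewrite /= in_itv /= delta0.
apply: ge_ereal_sup => _ [J [r [x [packJ [disjJ ->]]]]].
have [r' [x' [packJ' sum_le]]] := transfer delta J r x delta0 (conj packJ disjJ).
apply: le_trans sum_le _; apply: lee_wpmul2l; first by rewrite lee_fin ltW.
by apply: ereal_sup_ubound; exists J, r', x'; case: packJ'.
Qed.

Lemma packing_measure_le_comap (phi : TB -> TA) (A : set TA) (B : set TB) (c : R) :
  0 < c -> (forall q, B q -> A (phi q)) ->
  (forall F delta J r x, 0 < delta -> is_packing dB (B `&` phi @^-1` F) delta J r x ->
     exists r' x', is_packing dA F delta J r' x' /\
       (packing_sum s J r <= c%:E * packing_sum s J r')%E) ->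
  (packing_measure dB s B <= c%:E * packing_measure dA s A)%E.
Proof.
move=> c0 phiBA transfer; rewrite /packing_measure -ereal_inf_pZl //.
apply: le_ereal_inf_tmp => _ [_ [Fi coverA <-] <-].
apply: le_trans
  (_ : \sum_(0 <= i <oo) packing_premeasure dB s (B `&` phi @^-1` Fi i) <= _)%E.
  apply: ereal_inf_lbound; exists (fun i => B `&` phi @^-1` Fi i) => //.
  by move=> q Bq; have [i _ Fiq] := coverA _ (phiBA q Bq); exists i.
rewrite -nneseriesZl => [|i _]; last exact: packing_premeasure_ge0 dA (phi tB) s (Fi i).
apply: lee_nneseries => [i _ _|i _]; first exact: packing_premeasure_ge0 dB tB s _.
exact: packing_premeasure_le (transfer (Fi i)).
Qed.

(* A packing of [B] lifts through [l] to a packing of [A] with the same radii: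
   two lifted balls meeting at [w] would give original balls meeting at [f w]. *)
Lemma packing_measure_le_section (f : TA -> TB) (l : TB -> TA) (A : set TA)
    (B : set TB) :
  (forall u v, dB (f u) (f v) <= dA u v) ->
  (forall q, B q -> A (l q) /\ f (l q) = q) ->
  (packing_measure dB s B <= packing_measure dA s A)%E.
Proof.
move=> f_lip lB; rewrite -[X in (_ <= X)%E]mul1e.
apply: (packing_measure_le_comap l) => [//|q /lB[]//|].
move=> F delta J r x _ [packJ disjJ].
exists r, (l \o x); rewrite mul1e; split => //; split.
  by move=> i /packJ[[_ Fx] rJ].
move=> i j Ji Jj ij; rewrite -subset0 => w [wi wj].
have fl k : J k -> f (l (x k)) = x k by move=> /packJ[[/lB[]]].
move: (disjJ i j Ji Jj ij); rewrite -subset0; apply; split; rewrite /cball.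
  by rewrite -(fl i Ji); exact: le_trans (f_lip _ w) wi.
by rewrite -(fl j Jj); exact: le_trans (f_lip _ w) wj.
Qed.

Lemma packing_measure_le_ball_meet (phi : TB -> TA) (K : R) (A : set TA)
    (B : set TB) :
  1 <= K -> (forall q, B q -> A (phi q)) ->
  (forall u v ru rv w, B u -> B v -> 0 < ru -> 0 < rv ->
     K * dA (phi u) w <= ru -> K * dA (phi v) w <= rv ->
     exists z, dB u z <= ru /\ dB v z <= rv) ->
  (packing_measure dB s B <= (K `^ s)%:E * packing_measure dA s A)%E.
Proof.
move=> K1 phiBA meet; have K0 : 0 < K := lt_le_trans ltr01 K1.
apply: (packing_measure_le_comap phi) => [|//|]; first by rewrite powR_gt0.
move=> F delta J r x _ [packJ disjJ].
exists (fun i => r i / K), (phi \o x); split; first split.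
- move=> i /packJ[[_ Fx] /andP[ri0 rid]]; split => //.
  by rewrite divr_gt0 //= (le_trans _ rid) // ler_pdivrMr // ler_peMr // ltW.
- move=> i j Ji Jj ij; rewrite -subset0 => w [wi wj].
  have [[Bi _] /andP[ri0 _]] := packJ i Ji; have [[Bj _] /andP[rj0 _]] := packJ j Jj.
  move: wi wj; rewrite /cball /= !ler_pdivlMr // ![_ * K]mulrC => wi wj.
  have [z [zi zj]] := meet _ _ _ _ w Bi Bj ri0 rj0 wi wj.
  by move: (disjJ i j Ji Jj ij); rewrite -subset0 => /(_ z (conj zi zj)).
rewrite /packing_sum; apply: le_trans (esumZl_le _ _ _ (powR_ge0 _ _) _) => [|i].
  2: by rewrite lee_fin powR_ge0.
apply: le_esum => i /packJ[_ /andP[ri0 _]].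
rewrite -EFinM -powRM; last 2 first.
- exact: ltW.
- by rewrite mulr_ge0 // divr_ge0 // ltW.
by rewrite mulrCA [K * _]mulrC divfK ?lt0r_neq0.
Qed.

End PackingComparison.

Section CoveringNumbers.
Context {R : realType}.

Lemma diam_le {T : Type} (d : T -> T -> R) (U : set T) (e : R) :
  (forall x y, U x -> U y -> d x y <= e) -> (diam d U <= e%:E)%E.
Proof. by move=> Ue; apply: ge_ereal_sup => _ [x Ux [y Uy <-]]; rewrite lee_fin Ue. Qed.

Lemma dist_le_diam {T : Type} (d : T -> T -> R) (U : set T) (e : R) (x y : T) :
  (diam d U <= e%:E)%E -> U x -> U y -> d x y <= e.
Proof.
move=> Ue Ux Uy; rewrite -lee_fin; apply: le_trans Ue.
by apply: ereal_sup_ubound; exists x => //; exists y.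
Qed.

Lemma covnum_ge1 {T : Type} (d : T -> T -> R) (F : set T) (e : R) (t : T) :
  F t -> (1 <= covnum d F e)%E.
Proof.
move=> Ft; apply: le_ereal_inf_tmp => _ [[|n] [U [_ coverF]] <-].
  by have [] := coverF t Ft.
by rewrite lee_fin ler1n.
Qed.

Lemma covnum_le_image {TA TB : Type} (dA : TA -> TA -> R) (dB : TB -> TB -> R)
    (f : TA -> TB) (c e : R) (A : set TA) (B : set TB) :
  0 <= c -> (forall u v, A u -> A v -> dB (f u) (f v) <= c * dA u v) ->
  B `<=` f @` A -> (covnum dB B (c * e) <= covnum dA A e)%E.
Proof.
move=> c0 f_lip BfA; apply: le_ereal_inf_tmp => _ [n [U [diamU coverA]] <-].
apply: ereal_inf_lbound; exists n => //; exists (fun i => f @` (A `&` U i)); split.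
  move=> i ni; apply: diam_le => _ _ [u [Au Uu] <-] [v [Av Uv] <-].
  apply: le_trans (f_lip u v Au Av) _; rewrite ler_wpM2l //.
  exact: dist_le_diam (diamU i ni) Uu Uv.
move=> q /BfA[p Ap <-]; have [i ni Uip] := coverA p Ap.
by exists i => //; exists p.
Qed.

End CoveringNumbers.

Section BoxRatios.
Context {R : realType}.

Definition log_ratio (N : \bar R) (e : R) : \bar R :=
  match N with
  | (x%:E)%E => (ln x / - ln e)%:E
  | _ => +oo%E
  end.

Lemma box_ratioE {T : Type} (d : T -> T -> R) (F : set T) (e : R) :
  box_ratio d F e = log_ratio (covnum d F e) e.
Proof. by []. Qed.

Lemma log_ratio_ge0 (N : \bar R) (e : R) :
  (1 <= N)%E -> 0 < e < 1 -> (0 <= log_ratio N e)%E.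
Proof.
case: N => [x||] //= x1 /ln_lt0/ltW lne0.
by rewrite lee_fin divr_ge0 ?oppr_ge0 // ln_ge0 // -lee_fin.
Qed.

Lemma le_log_ratio (N N' : \bar R) (e : R) :
  (1 <= N)%E -> (N <= N')%E -> 0 < e < 1 -> (log_ratio N e <= log_ratio N' e)%E.
Proof.
case: N' => [y||] /=; [|by move=> *; rewrite leey|by case: N].
case: N => [x||] //= x1 xy /ln_lt0/ltW lne0; rewrite lee_fin in x1 xy *.
apply: ler_wpM2r; first by rewrite invr_ge0 oppr_ge0.
by rewrite ler_ln // posrE (lt_le_trans ltr01) // (le_trans x1).
Qed.

End BoxRatios.

Lemma log_ratio_scale_le {R : realType} (K r e : R) (N N' : \bar R) :
  1 <= K -> 0 < r < 1 -> 0 < e < 1 -> (1 <= N)%E -> (N <= N')%E ->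
  ln K <= (1 - r) * - ln e ->
  (r%:E * log_ratio N (K * e) <= log_ratio N' e)%E.
Proof.
move=> K1 /andP[r0 r1] /andP[e0 e1] N1 NN' lnK.
case: N' NN' => [y||] NN' /=; [|by rewrite leey|by case: N N1 NN'].
case: N N1 NN' => [x||] //= x1 xy; rewrite !lee_fin in x1 xy *.
have K0 : 0 < K := lt_le_trans ltr01 K1.
rewrite lnM ?posrE //; set u := - ln e.
have u0 : 0 < u by rewrite oppr_gt0 ln_lt0 // e0.
have lnx0 : 0 <= ln x := ln_ge0 x1.
have lnxy : ln x <= ln y by rewrite ler_ln // posrE (lt_le_trans ltr01) // (le_trans x1).
have ru : r * u <= u - ln K by move: lnK; rewrite /u mulrBl mul1r; lra.
have uK : 0 < u - ln K := lt_le_trans (mulr_gt0 r0 u0) ru.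
have -> : - (ln K + ln e) = u - ln K by rewrite /u opprD addrC.
rewrite mulrA ler_pdivrMr // mulrAC ler_pdivlMr //; nra.
Qed.

(* Below [E], [ln K] is at most the fraction [1 - r] of [- ln e]. *)
Lemma log_ratio_scale_near0 {R : realType} (K r : R) :
  1 <= K -> 0 < r < 1 -> exists2 E : R, 0 < E & forall e N N', 0 < e < E ->
    (1 <= N)%E -> (N <= N')%E -> (r%:E * log_ratio N (K * e) <= log_ratio N' e)%E.
Proof.
move=> K1 r01; have /andP[_ r1] := r01; have r'0 : 0 < 1 - r by rewrite subr_gt0.
exists (Num.min 1 (expR (- (ln K / (1 - r))))); first by rewrite lt_min ltr01 expR_gt0.
move=> e N N' /andP[e0]; rewrite lt_min => /andP[e1 eE] N1 NN'.
apply: log_ratio_scale_le; rewrite ?e0 ?e1 //.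
have : ln e < - (ln K / (1 - r)).
  by rewrite -[X in _ < X]expRK ltr_ln // posrE expR_gt0.
rewrite ltrNr => /ltW lnKr.
rewrite -[ln K](@divfK _ (1 - r)) ?lt0r_neq0 // mulrC.
by rewrite ler_wpM2l // ltW.
Qed.

Section LimitsAt0.
Context {R : realType}.
Implicit Types rho : R -> \bar R.

Definition limsup0 rho : \bar R :=
  ereal_inf [set ereal_sup [set rho delta | delta in `]0, e[] | e in `]0, 1]].

Definition liminf0 rho : \bar R :=
  ereal_sup [set ereal_inf [set rho delta | delta in `]0, e[] | e in `]0, 1]].

Lemma upper_box_dimE {T : Type} (d : T -> T -> R) (F : set T) :
  upper_box_dim d F = limsup0 (box_ratio d F).
Proof. by []. Qed.

Lemma lower_box_dimE {T : Type} (d : T -> T -> R) (F : set T) :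
  lower_box_dim d F = liminf0 (box_ratio d F).
Proof. by []. Qed.

Lemma le_limsup0 rho rho' :
  (forall d, 0 < d < 1 -> (rho d <= rho' d)%E) -> (limsup0 rho <= limsup0 rho')%E.
Proof.
move=> le_rho; apply: le_ereal_inf_tmp => _ [e e01 <-].
move: e01; rewrite /= in_itv /= => /andP[e0 e1].
apply: ge_ereal_inf; exists (ereal_sup [set rho d | d in `]0, e[]).
  by exists e => //; rewrite /= in_itv /= e0.
apply: ge_ereal_sup => _ [d de <-].
move: (de); rewrite /= in_itv /= => /andP[d0 dlte].
apply: le_trans (le_rho d _) _; first by rewrite d0 (lt_le_trans dlte).
by apply: ereal_sup_ubound; exists d.
Qed.

Lemma le_liminf0 rho rho' :
  (forall d, 0 < d < 1 -> (rho d <= rho' d)%E) -> (liminf0 rho <= liminf0 rho')%E.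
Proof.
move=> le_rho; apply: ge_ereal_sup => _ [e e01 <-].
move: (e01); rewrite /= in_itv /= => /andP[e0 e1].
apply: le_ereal_sup_tmp; exists (ereal_inf [set rho' d | d in `]0, e[]).
  by exists e.
apply: le_ereal_inf_tmp => _ [d de <-].
move: (de); rewrite /= in_itv /= => /andP[d0 dlte].
apply: le_trans _ (le_rho d _); last by rewrite d0 (lt_le_trans dlte).
by apply: ereal_inf_lbound; exists d.
Qed.

Lemma limsup0_le_scale rho rho' (K : R) : 0 < K ->
  (forall d, 0 < d < 1 -> (0 <= rho d)%E) ->
  (forall r, 0 < r < 1 -> exists2 E : R, 0 < E &
     forall d, 0 < d < E -> (r%:E * rho (K * d)%R <= rho' d)%E) ->
  (limsup0 rho <= limsup0 rho')%E.
Proof.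
move=> K0 rho_ge0 scale.
have limsup_ge0 : (0 <= limsup0 rho)%E.
  apply: le_ereal_inf_tmp => _ [e e01 <-].
  move: e01; rewrite /= in_itv /= => /andP[e0 e1].
  have e2e : e / 2 < e by rewrite ltr_pdivrMr // ltr_pMr // ltr1n.
  apply: le_ereal_sup_tmp; exists (rho (e / 2)).
    by exists (e / 2) => //; rewrite /= in_itv /= divr_gt0.
  by apply: rho_ge0; rewrite divr_gt0 //= (lt_le_trans e2e).
apply/lee_mul01Pr => // r r01; have [E E0 scaleE] := scale r r01.
have /andP[r0 _] := r01.
apply: le_ereal_inf_tmp => _ [e e01 <-].
move: e01; rewrite /= in_itv /= => /andP[e0 e1].
set e' := Num.min 1 (K * Num.min e E).
have e'0 : 0 < e' by rewrite lt_min ltr01 mulr_gt0 // lt_min e0.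
have le_sup : (limsup0 rho <= ereal_sup [set rho d | d in `]0%R, e'[])%E.
  by apply: ereal_inf_lbound; exists e' => //; rewrite /= in_itv /= e'0 ge_min lexx.
apply: le_trans (lee_wpmul2l _ le_sup) _; first by rewrite lee_fin ltW.
rewrite -ereal_sup_pZl //.
apply: ge_ereal_sup => _ [_ [d de' <-] <-].
move: de'; rewrite /= in_itv /= => /andP[d0 de'].
have dK : d / K < Num.min e E.
  by rewrite ltr_pdivrMr // mulrC (lt_le_trans de') // ge_min lexx orbT.
rewrite -[d](@divfK _ K) ?lt0r_neq0 // [d / K * K]mulrC.
apply: le_trans (scaleE (d / K) _) _.
  by rewrite divr_gt0 //= (lt_le_trans dK) // ge_min lexx orbT.
apply: ereal_sup_ubound; exists (d / K) => //.
by rewrite /= in_itv /= divr_gt0 //= (lt_le_trans dK) // ge_min lexx.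
Qed.

Lemma liminf0_le_scale rho rho' (K : R) : 1 <= K ->
  (forall d, 0 < d < 1 -> (0 <= rho d)%E) ->
  (forall r, 0 < r < 1 -> exists2 E : R, 0 < E &
     forall d, 0 < d < E -> (r%:E * rho (K * d)%R <= rho' d)%E) ->
  (liminf0 rho <= liminf0 rho')%E.
Proof.
move=> K1 rho_ge0 scale; have K0 : 0 < K := lt_le_trans ltr01 K1.
apply: ge_ereal_sup => _ [e e01 <-].
move: e01; rewrite /= in_itv /= => /andP[e0 e1].
have inf_ge0 : (0 <= ereal_inf [set rho d | d in `]0%R, e[])%E.
  apply: le_ereal_inf_tmp => _ [d de <-].
  move: de; rewrite /= in_itv /= => /andP[d0 de].
  by apply: rho_ge0; rewrite d0 (lt_le_trans de).
apply/lee_mul01Pr => // r r01; have [E E0 scaleE] := scale r r01.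
have /andP[r0 _] := r01.
set e' := Num.min (e / K) E.
have e'0 : 0 < e' by rewrite lt_min E0 divr_gt0.
have e'e : e' <= e by rewrite ge_min ler_pdivrMr // ler_peMr // ltW.
apply: le_ereal_sup_tmp; exists (ereal_inf [set rho' d | d in `]0, e'[]).
  by exists e' => //; rewrite /= in_itv /= e'0 (le_trans e'e).
apply: le_ereal_inf_tmp => _ [d de' <-].
move: de'; rewrite /= in_itv /= => /andP[d0 de'].
apply: le_trans _ (scaleE d _); last by rewrite d0 (lt_le_trans de') // ge_min lexx orbT.
apply: lee_wpmul2l; first by rewrite lee_fin ltW.
apply: ereal_inf_lbound; exists (K * d) => //.
rewrite /= in_itv /= mulr_gt0 //= mulrC -ltr_pdivlMr //.
by rewrite (lt_le_trans de') // ge_min lexx.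
Qed.

End LimitsAt0.

Lemma box_dims_eq {R : realType} {TA TB : Type} (dA : TA -> TA -> R)
    (dB : TB -> TB -> R) (A : set TA) (B : set TB) (K : R) (tA : TA) :
  1 <= K -> A tA ->
  (forall e, covnum dA A e <= covnum dB B e)%E ->
  (forall e, covnum dB B (K * e)%R <= covnum dA A e)%E ->
  upper_box_dim dB B = upper_box_dim dA A /\
  lower_box_dim dB B = lower_box_dim dA A.
Proof.
move=> K1 AtA NAB NBA; have K0 : 0 < K := lt_le_trans ltr01 K1.
have NA1 e : (1 <= covnum dA A e)%E := covnum_ge1 _ _ e _ AtA.
have NB1 e : (1 <= covnum dB B e)%E := le_trans (NA1 e) (NAB e).
have le_ratio d : 0 < d < 1 -> (box_ratio dA A d <= box_ratio dB B d)%E.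
  by move=> d01; rewrite !box_ratioE le_log_ratio.
have ratioB_ge0 d : 0 < d < 1 -> (0 <= box_ratio dB B d)%E.
  by move=> d01; rewrite box_ratioE log_ratio_ge0.
have scale r : 0 < r < 1 -> exists2 E : R, 0 < E &
    forall d, 0 < d < E -> (r%:E * box_ratio dB B (K * d)%R <= box_ratio dA A d)%E.
  move=> r01; have [E E0 scaleE] := log_ratio_scale_near0 K r K1 r01.
  by exists E => // d dE; rewrite !box_ratioE scaleE.
rewrite !upper_box_dimE !lower_box_dimE.
split; apply/eqP; rewrite eq_le; apply/andP; split.
- exact: limsup0_le_scale K0 ratioB_ge0 scale.
- exact: le_limsup0 le_ratio.
- exact: liminf0_le_scale K1 ratioB_ge0 scale.
- exact: le_liminf0 le_ratio.
Qed.

Section EuclideanDistances.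
Context {R : realType}.

Lemma sqrtr_le_sqr (X r : R) : 0 <= r -> X <= r ^+ 2 -> Num.sqrt X <= r.
Proof.
by move=> r0 Xr; rewrite -(ger0_norm r0) -sqrtr_sqr ler_sqrt // sqr_ge0.
Qed.

Lemma sqr_le_sqrtr (X r : R) : 0 <= r -> r ^+ 2 <= X -> r <= Num.sqrt X.
Proof.
move=> r0 rX; rewrite -(ger0_norm r0) -sqrtr_sqr ler_sqrt //.
exact: le_trans (sqr_ge0 r) rX.
Qed.

Lemma ler_sqr_norm (u v : R) : `|u| <= v -> u ^+ 2 <= v ^+ 2.
Proof.
move=> uv; rewrite -real_normK ?num_real // ler_pXn2r ?nnegrE //.
exact: le_trans uv.
Qed.

Lemma sqrt1Dsqr_ge1 (L : R) : 1 <= Num.sqrt (1 + L ^+ 2).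
Proof. by apply: sqr_le_sqrtr; rewrite // expr1n lerDl sqr_ge0. Qed.

Lemma dist2_ge0 (p q : R * R) : 0 <= dist2 p q.
Proof. exact: sqrtr_ge0. Qed.

Lemma dist3E (u v : R * R * R) :
  dist3 u v = Num.sqrt (dist2 u.1 v.1 ^+ 2 + (u.2 - v.2) ^+ 2).
Proof. by rewrite /dist3 /dist2 sqr_sqrtr // addr_ge0 // sqr_ge0. Qed.

Lemma dist2_fst_le (u v : R * R * R) : dist2 u.1 v.1 <= dist3 u v.
Proof. by rewrite dist3E; apply: sqr_le_sqrtr; rewrite ?dist2_ge0 // lerDl sqr_ge0. Qed.

Lemma normB_fst_le_dist2 (p q : R * R) : `|p.1 - q.1| <= dist2 p q.
Proof. by rewrite -sqrtr_sqr ler_sqrt ?lerDl ?addr_ge0 ?sqr_ge0. Qed.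

End EuclideanDistances.

Section GraphGeometry.
Context {R : realType}.
Variables (g h : R -> R) (L : R).
Hypothesis L0 : 0 <= L.
Local Notation K := (Num.sqrt (1 + L ^+ 2)).

Let K0 : 0 < K. Proof. exact: lt_le_trans ltr01 (sqrt1Dsqr_ge1 L). Qed.

Let K2 : K ^+ 2 = 1 + L ^+ 2.
Proof. by rewrite sqr_sqrtr // addr_ge0 // sqr_ge0. Qed.

Lemma dist3_lift_le (x y : R) : `|h x - h y| <= L * `|x - y| ->
  dist3 (x, g x, h x) (y, g y, h y) <= K * dist2 (x, g x) (y, g y).
Proof.
move=> hxy; set D := dist2 _ _.
have D0 : 0 <= D := dist2_ge0 _ _.
have dx : `|x - y| <= D := normB_fst_le_dist2 (x, g x) (y, g y).
have /ler_sqr_norm dh : `|h x - h y| <= L * D.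
  by apply: le_trans hxy _; rewrite ler_wpM2l.
rewrite dist3E; apply: sqrtr_le_sqr; first exact: mulr_ge0 (sqrtr_ge0 _) D0.
rewrite /= exprMn K2 -/D; nra.
Qed.

(* The vertical offset of the chosen point from [h xi] is at most [ri L / K],
   its horizontal distance at most [ri / K], and [K ^+ 2 = 1 + L ^+ 2]. *)
Lemma dist3_lift_weighted_le (xi xj ri rj : R) (z : R * R) :
  `|h xi - h xj| <= L * `|xi - xj| -> 0 < ri -> 0 < rj ->
  K * dist2 (xi, g xi) z <= ri -> K * dist2 (xj, g xj) z <= rj ->
  dist3 (xi, g xi, h xi) (z, (rj * h xi + ri * h xj) / (ri + rj)) <= ri.
Proof.
move=> hij ri0 rj0; set di := dist2 _ z; set dj := dist2 _ z => hi hj.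
have rr0 : 0 < ri + rj by rewrite addr_gt0.
have dxij : `|xi - xj| <= di + dj.
  apply: le_trans (ler_distD z.1 _ _) _.
  apply: lerD; first exact: normB_fst_le_dist2 (xi, g xi) z.
  by rewrite distrC; exact: normB_fst_le_dist2 (xj, g xj) z.
set E := (h xi - h xj) / (ri + rj).
have offsetE : h xi - (rj * h xi + ri * h xj) / (ri + rj) = ri * E.
  by rewrite /E; field; rewrite lt0r_neq0.
have /ler_sqr_norm KE : `|K * E| <= L.
  rewrite normrM normf_div (gtr0_norm K0) (gtr0_norm rr0) mulrA ler_pdivrMr //.
  apply: le_trans (_ : K * (L * (di + dj)) <= _).
    by rewrite ler_pM2l // (le_trans hij) // ler_wpM2l.
  by rewrite mulrCA ler_wpM2l // mulrDr lerD.
have /ler_sqr_norm Kdi : `|K * di| <= ri.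
  by rewrite ger0_norm // mulr_ge0 ?dist2_ge0 // ltW.
clearbody E; rewrite dist3E /= offsetE -/di; apply: sqrtr_le_sqr; first exact: ltW.
rewrite !exprMn K2 in KE Kdi.
have KL0 : 0 < 1 + L ^+ 2 by rewrite -K2 exprn_gt0.
rewrite -(ler_pM2l KL0); have := ler_wpM2l (sqr_ge0 ri) KE.
nra.
Qed.

Lemma graphC_cball_meet (xi xj ri rj : R) (z : R * R) :
  `|h xi - h xj| <= L * `|xi - xj| -> 0 < ri -> 0 < rj ->
  K * dist2 (xi, g xi) z <= ri -> K * dist2 (xj, g xj) z <= rj ->
  exists w, dist3 (xi, g xi, h xi) w <= ri /\ dist3 (xj, g xj, h xj) w <= rj.
Proof.
move=> hij ri0 rj0 hi hj.
exists (z, (rj * h xi + ri * h xj) / (ri + rj)); split.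
  exact: dist3_lift_weighted_le.
rewrite addrC (addrC ri); apply: dist3_lift_weighted_le => //.
by rewrite distrC (distrC xj).
Qed.

End GraphGeometry.

Section GraphComparisons.
Context {R : realType}.
Variables (a b : R) (g h : R -> R) (L : R).
Hypothesis L0 : 0 <= L.
Hypothesis h_lip : forall x y, x \in `[a, b] -> y \in `[a, b] ->
  `|h x - h y| <= L * `|x - y|.
Local Notation K := (Num.sqrt (1 + L ^+ 2)).
Local Notation lift := (fun p : R * R => (p, h p.1)).

Lemma covnum_graph2_le_graphC (e : R) :
  (covnum dist2 (graph2 a b g) e <= covnum dist3 (graphC a b g h) e)%E.
Proof.
rewrite -[e in covnum _ _ e]mul1r; apply: (covnum_le_image _ _ fst) => //.
  by move=> u v _ _; rewrite mul1r dist2_fst_le.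
by move=> _ [x xab <-]; exists (x, g x, h x) => //; exists x.
Qed.

Lemma covnum_graphC_le_graph2 (e : R) :
  (covnum dist3 (graphC a b g h) (K * e) <= covnum dist2 (graph2 a b g) e)%E.
Proof.
apply: (covnum_le_image _ _ lift) => [||_ [x xab <-]]; first exact: sqrtr_ge0.
  by move=> _ _ [x xab <-] [y yab <-]; apply: dist3_lift_le; rewrite // h_lip.
by exists (x, g x) => //; exists x.
Qed.

Lemma packing_measure_graph2_le (s : R) :
  (packing_measure dist2 s (graph2 a b g) <= packing_measure dist3 s (graphC a b g h))%E.
Proof.
apply: (packing_measure_le_section _ _ (0, 0) s fst lift) => [u v|_ [x xab <-]].
  exact: dist2_fst_le.
by split => //; exists x.
Qed.

Lemma packing_measure_graphC_le (s : R) :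
  (packing_measure dist3 s (graphC a b g h) <=
     (K `^ s)%:E * packing_measure dist2 s (graph2 a b g))%E.
Proof.
apply: (packing_measure_le_ball_meet _ _ (0, 0, 0) s fst) => [||u v ru rv w].
- exact: sqrt1Dsqr_ge1.
- by move=> _ [x xab <-]; exists x.
move=> [x xab <-] [y yab <-] ru0 rv0 uw vw.
by apply: (graphC_cball_meet _ _ _ L0 _ _ _ _ w) => //; apply: h_lip.
Qed.

End GraphComparisons.

Theorem mainTheorem3 (R : realType) (a b : R) (g h : R -> R) :
  a < b ->
  {within `[a, b], continuous g} ->
  {within `[a, b], continuous h} ->
  (exists L : R, forall x y, x \in `[a, b] -> y \in `[a, b] ->
      `|h x - h y| <= L * `|x - y|) ->
  packing_dim dist3 (graphC a b g h) = packing_dim dist2 (graph2 a b g) /\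
  upper_box_dim dist3 (graphC a b g h) = upper_box_dim dist2 (graph2 a b g) /\
  lower_box_dim dist3 (graphC a b g h) = lower_box_dim dist2 (graph2 a b g).
Proof.
move=> ab _ _ [L' h_lip'].
have [L L0 h_lip] : exists2 L : R, 0 <= L & forall x y, x \in `[a, b] ->
    y \in `[a, b] -> `|h x - h y| <= L * `|x - y|.
  exists `|L'| => // x y xab yab; apply: le_trans (h_lip' x y xab yab) _.
  by rewrite ler_wpM2r // ler_norm.
have graph2_a : graph2 a b g (a, g a) by exists a; rewrite //= in_itv /= lexx ltW.
split.
  apply: (packing_dim_eq_of_le _ _ _ _ (0, 0, 0) (0, 0)) => s.
    by exists (Num.sqrt (1 + L ^+ 2) `^ s); exact: packing_measure_graphC_le.
  by exists 1; rewrite mul1e; exact: packing_measure_graph2_le.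
apply: (box_dims_eq _ _ _ _ _ _ (sqrt1Dsqr_ge1 L) graph2_a).
  exact: covnum_graph2_le_graphC.
exact: covnum_graphC_le_graph2.
Qed.
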